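(* Let $R\subseteq S$ be a module-finite generically separable inclusion of $F$-finite normal domains of characteristic $p>0$, with $K=\mathrm{Frac}R$, $L=\mathrm{Frac}S$. Suppose $\bar\phi\in\mathrm{Hom}_S(S^{1/p^e},S)$ extends a non-zero $\phi\in\mathrm{Hom}_R(R^{1/p^e},R)$, and that $\psi\in\mathrm{Hom}_R(S,R)$ satisfies $\psi\circ\bar\phi=\phi\circ\psi^{1/p^e}$ on $S^{1/p^e}$. Then there exists $u\in\mathbb F_{p^e}\cap L$ such that $\psi(-)=\mathrm{Tr}_{L/K}(u\cdot-)$.
   Context: $R^{1/p^e}\subseteq S^{1/p^e}$ denote the rings of $p^e$-th roots inside an algebraic closure of $L$. ''$\bar\phi$ extends $\phi$'' means $\bar\phi|_{R^{1/p^e}}=\phi$. $\psi^{1/p^e}\colon S^{1/p^e}\to R^{1/p^e}$ is $s^{1/p^e}\mapsto\psi(s)^{1/p^e}$. $\mathbb F_{p^e}\cap L$ denotes the elements $u\in L$ with $u^{p^e}=u$. $\mathrm{Tr}_{L/K}$ is the field trace. $F$-finite: Frobenius is finite. *)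

From HB Require Import structures.
From mathcomp Require Import all_boot all_order all_algebra all_field.
Set Implicit Arguments. Unset Strict Implicit. Unset Printing Implicit Defensive.
Import GRing.Theory.
Local Open Scope ring_scope.

Definition is_subring (T : comNzRingType) (A : pred T) : Prop :=
  1 \in A /\ forall x y, x \in A -> y \in A -> (x - y \in A) /\ (x * y \in A).

Definition is_frac_field (F : fieldType) (A : pred F) : Prop :=
  forall x : F, exists a b, [/\ a \in A, b \in A, b != 0 & x = a / b].

Definition integral_over (F : fieldType) (A : pred F) (x : F) : Prop :=
  exists2 q : {poly F}, (q \is monic) && (all (fun c => c \in A) q) & root q x.

(* A is normal: integrally closed in its fraction field (the ambient F). *)
Definition is_normal (F : fieldType) (A : pred F) : Prop :=
  forall x : F, integral_over A x -> x \in A.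

(* F-finite: A is a finitely generated module over its subring A^p
   (i.e. the Frobenius of A is finite). *)
Definition F_finite (F : fieldType) (p : nat) (A : pred F) : Prop :=
  exists g : seq F, all (fun s => s \in A) g /\
    forall a, a \in A -> exists c : nat -> F,
      (forall i, c i \in A) /\ a = \sum_(i < size g) (c i) ^+ p * g`_i.

Definition module_finite (K : fieldType) (L : fieldExtType K)
    (R : pred K) (S : pred L) : Prop :=
  exists g : seq L, all (fun s => s \in S) g /\
    forall s, s \in S -> exists c : nat -> K,
      (forall i, c i \in R) /\ s = \sum_(i < size g) (c i)%:A * g`_i.

Definition fieldTrace (K : fieldType) (L : fieldExtType K) (x : L) : K :=
  \tr (passmx.mxof (vbasis {:L}%VS) (vbasis {:L}%VS) (amulr x)).

(* An element phi of Hom_A(A^{1/q}, A), q = p^e, recorded through the map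
   f : A -> A, f a := phi(a^{1/q}); A-linearity of phi becomes
   additivity plus f (b^q * a) = b * f a. *)
Definition is_pinv_linear (F : fieldType) (q : nat) (A : pred F) (f : F -> F) :=
  [/\ forall a, a \in A -> f a \in A,
      forall a b, a \in A -> b \in A -> f (a + b) = f a + f b
    & forall a b, a \in A -> b \in A -> f (b ^+ q * a) = b * f a].

From HB Require Import structures.
From mathcomp Require Import all_boot all_order all_algebra all_field.

(* The trace form of the separable extension L/K is nondegenerate, so the K-linear
   extension of psi to L is Tr(w * -) for some w in L.  Compatibility of psi with
   phi and phibar, together with the faithfulness of the nonzero map phi, gives
   psi (b ^ q) = psi b ^ q on S (q = p ^ e); as Tr commutes with the Frobenius,
   Tr ((w - w ^ q) * b ^ q) = 0 for b in S, hence for all b in L after clearing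
   denominators.  In a separable extension the q-th powers span L over K, and
   nondegeneracy yields w = w ^ q. *)

Set Implicit Arguments. Unset Strict Implicit. Unset Printing Implicit Defensive.
Import GRing.Theory.
Local Open Scope ring_scope.

Section PolyMatrix.
Variable R : comNzRingType.

Lemma deriv_big_prod (I : eqType) (s : seq I) (f : I -> {poly R}) : uniq s ->
  (\prod_(i <- s) f i)^`() = \sum_(j <- s) (f j)^`() * \prod_(i <- s | i != j) f i.
Proof.
elim: s => [|a s IHs] /=; first by rewrite !big_nil -polyC1 derivC.
case/andP => a_notin_s uniq_s; rewrite !big_cons derivM IHs // eqxx /=.
have neq_a i : i \in s -> a != i by move=> i_s; apply: contraNneq a_notin_s => ->.
have -> : \prod_(i <- s | i != a) f i = \prod_(i <- s) f i.
  rewrite big_seq_cond [RHS]big_seq; apply: eq_bigl => i.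
  by case: (boolP (i \in s)) => //= /neq_a; rewrite eq_sym => ->.
congr (_ + _); rewrite big_distrr /= [RHS]big_seq [LHS]big_seq.
by apply: eq_bigr => j /neq_a a_j; rewrite big_cons a_j mulrCA.
Qed.

Lemma deriv_char_poly n (A : 'M[R]_n) :
  (char_poly A)^`() = \tr (\adj (char_poly_mx A)).
Proof.
rewrite /char_poly /determinant (raddf_sum (@deriv R)) /= /mxtrace.
have deriv_sign (b : bool) (q : {poly R}) : ((-1) ^+ b * q)^`() = (-1) ^+ b * q^`().
  by case: b; rewrite ?expr0 ?expr1 ?mul1r ?mulN1r ?derivN.
under eq_bigr => s _ do
  rewrite deriv_sign deriv_big_prod ?index_enum_uniq // big_distrr /=.
rewrite exchange_big /=; apply: eq_bigr => j _.
rewrite mxE expand_cofactor [RHS]big_mkcond /=; apply: eq_bigr => s _.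
rewrite {1}/char_poly_mx !mxE derivB derivMn derivX derivC subr0 eq_sym.
case: eqP => _; last by rewrite mulr0n mul0r mulr0.
by rewrite mulr1n mul1r; congr (_ * _); apply: eq_bigl => i; rewrite eq_sym.
Qed.

Lemma mxtrace_adj_char_poly_mx_eq0 n (A : 'M[R]_n) :
  (forall k, \tr (A ^+ k) = 0) -> \tr (\adj (char_poly_mx A)) = 0.
Proof.
case: n A => [|n] A trA0; first by rewrite /mxtrace big_ord0.
have := mul_mx_adj (char_poly_mx A); move: (\adj _) => N MN.
pose B i := \matrix_(a, b) (N a b)`_i : 'M[R]_n.+1.
(* Compare the coefficients of ['X^i.+1] in [(X - A) N = chi]. *)
have B_rec i : B i = ((char_poly A)`_i.+1)%:M + A *m B i.+1.
  apply/matrixP => a b; have := congr1 (fun M : 'M[{poly R}]_n.+1 => (M a b)`_i.+1) MN.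
  rewrite /char_poly_mx mulmxBl mul_scalar_mx !mxE coefB coefXM /= coef_sum coefMn.
  have -> : \sum_j A a j * B i.+1 j b = \sum_c (map_mx polyC A a c * N c b)`_i.+1.
    by apply: eq_bigr => c _; rewrite !mxE coefCM.
  by move <-; rewrite subrK.
pose m := \max_(ab : 'I_n.+1 * 'I_n.+1) size (N ab.1 ab.2).
have B_eq0 i : (m <= i)%N -> B i = 0.
  move=> le_mi; apply/matrixP => a b; rewrite !mxE nth_default //.
  exact: leq_trans (leq_bigmax (a, b)) le_mi.
have trB d i k : (m <= i + d)%N -> \tr (A ^+ k *m B i) = 0.
  elim: d i k => [|d IHd] i k; first by rewrite addn0 => /B_eq0 ->; rewrite mulmx0 mxtrace0.
  rewrite addnS -addSn => /IHd trBi; rewrite B_rec mulmxDr mxtraceD mul_mx_scalar.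
  by rewrite mxtraceZ trA0 mulr0 add0r mulmxA mulmxE -exprSr -mulmxE trBi.
apply/polyP => i; rewrite coef0 /mxtrace coef_sum.
rewrite -[RHS](trB m i 0%N (leq_addl _ _)) expr0 mul1mx /mxtrace.
by apply: eq_bigr => a _; rewrite mxE.
Qed.

Lemma Cayley_Hamilton_coef n (A : 'M[R]_n) :
  \sum_(i < size (char_poly A)) (char_poly A)`_i *: A ^+ i = 0.
Proof.
case: n A => [|n] A; first exact: flatmx0.
have := Cayley_Hamilton A; rewrite /horner_mx /horner_morph.
rewrite (@horner_coef_wide _ (size (char_poly A))); last first.
  by rewrite size_map_poly_id0 // (monicP (char_poly_monic A)) oner_neq0.
move=> CH; rewrite -[RHS]CH; apply: eq_bigr => i _.
by rewrite coef_map /= -mulmxE mul_scalar_mx.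
Qed.

Lemma coef_pchar_expr (p : nat) (q : {poly R}) i :
  p \in [pchar R] -> (q ^+ p)`_(p * i) = q`_i ^+ p.
Proof.
move=> pR; have p_gt0 := prime_gt0 (pcharf_prime pR).
have pP : p \in [pchar {poly R}] by rewrite pchar_poly.
suff -> : q ^+ p = map_poly (pFrobenius_aut pR) q \Po 'X^p.
  by rewrite coef_comp_poly_Xn // dvdn_mulr // mulKn // coef_map.
elim/poly_ind: q => [|q c IHq]; first by rewrite map_poly0 comp_poly0 expr0n gtn_eqF.
rewrite -(pFrobenius_autE pP) rmorphD rmorphM /= !pFrobenius_autE IHq.
rewrite rmorphD rmorphM /= map_polyX map_polyC /= comp_poly_MXaddC.
by rewrite -polyC_exp -(pFrobenius_autE pR).
Qed.

Lemma mxtrace_frobenius (p n : nat) (A : 'M[R]_n) :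
  p \in [pchar R] -> \tr (A ^+ p) = \tr A ^+ p.
Proof.
move=> pR; have p_gt0 := prime_gt0 (pcharf_prime pR).
case: n A => [|n] A; first by rewrite /mxtrace !big_ord0 expr0n gtn_eqF.
have pP : p \in [pchar {poly R}] by rewrite pchar_poly.
have pM : p \in [pchar 'M[{poly R}]_n.+1] by rewrite (rmorph_pchar (@scalar_mx _ n.+1)).
have comm_XA : GRing.comm ('X%:M : 'M[{poly R}]_n.+1) (map_mx polyC A).
  by rewrite /GRing.comm -!mulmxE scalar_mxC.
(* [chi_(A^p)(X^p) = chi_A(X)^p]; compare the coefficients of ['X^(p * n)]. *)
have char_poly_expr : char_poly (A ^+ p) \Po 'X^p = char_poly A ^+ p.
  have -> : char_poly A ^+ p = \det (char_poly_mx A ^+ p).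
    by elim: (p) => [|k IHk]; rewrite ?det1 // !exprS detM IHk.
  rewrite /char_poly -det_map_mx; congr (\det _).
  rewrite /char_poly_mx -(pFrobenius_autE pM) pFrobenius_autB_comm //.
  rewrite !pFrobenius_autE -rmorphXn -(rmorphXn (map_mx polyC)) /=.
  apply/matrixP => i j; rewrite !mxE.
  by rewrite comp_polyB comp_polyC; case: (i == j); rewrite ?comp_polyX ?comp_poly0.
have := congr1 (fun q : {poly R} => q`_(p * n)) char_poly_expr => /=.
rewrite coef_comp_poly_Xn // dvdn_mulr // mulKn // coef_pchar_expr //.
rewrite !char_poly_trace //= -(pFrobenius_autE pR) pFrobenius_autN pFrobenius_autE.
exact: oppr_inj.
Qed.

End PolyMatrix.

Section FieldTrace.
Variables (K : fieldType) (L : fieldExtType K).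

Definition regmx (x : L) := passmx.mxof (vbasis {:L}) (vbasis {:L}) (amulr x).

Lemma fieldTraceE (x : L) : fieldTrace x = \tr (regmx x). Proof. by []. Qed.

Lemma regmx_is_linear : linear regmx.
Proof. by move=> a x y; rewrite /regmx linearP passmx.mxof_linear. Qed.
HB.instance Definition _ := GRing.isSemilinear.Build K L _ _ regmx
  (GRing.semilinear_linear regmx_is_linear).

Lemma fieldTrace_is_linear : linear (@fieldTrace K L : L -> K^o).
Proof. by move=> a x y; rewrite !fieldTraceE linearP mxtraceD mxtraceZ. Qed.
HB.instance Definition _ := GRing.isSemilinear.Build K L K^o _ (@fieldTrace K L)
  (GRing.semilinear_linear fieldTrace_is_linear).

Lemma fieldTraceB (x y : L) : fieldTrace (x - y) = fieldTrace x - fieldTrace y.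
Proof. exact: linearB. Qed.

Lemma fieldTraceZ (a : K) (x : L) : fieldTrace (a *: x) = a * fieldTrace x.
Proof. exact: linearZ. Qed.

Lemma regmx_inj : injective regmx.
Proof. by move=> x y /(can_inj (passmx.mxofK (vbasisP _) (vbasisP _)))/amulr_inj. Qed.

Lemma regmxM (x y : L) : regmx (x * y) = regmx x *m regmx y.
Proof. by rewrite /regmx rmorphM -passmx.mxof_comp ?vbasisP. Qed.

Lemma regmxX (x : L) k : regmx (x ^+ k) = regmx x ^+ k.
Proof.
elim: k => [|k IHk]; last by rewrite exprS regmxM IHk mulmxE -exprS.
by rewrite !expr0 /regmx rmorph1 passmx.mxof1 ?(basis_free (vbasisP _)).
Qed.

Lemma fieldTrace_frobenius (p e : nat) (x : L) : p \in [pchar K] ->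
  fieldTrace (x ^+ (p ^ e)) = fieldTrace x ^+ (p ^ e).
Proof.
move=> pK; elim: e => [|e IHe]; first by rewrite !expn0 !expr1.
by rewrite expnSr !exprM -IHe !fieldTraceE !regmxX mxtrace_frobenius.
Qed.

Lemma regmx_horner (q : {poly K}) (x : L) :
  regmx (map_poly (in_alg L) q).[x] = \sum_(i < size q) q`_i *: regmx x ^+ i.
Proof.
rewrite horner_coef size_map_poly linear_sum; apply: eq_bigr => i _.
by rewrite coef_map /= mulr_algl linearZ /= regmxX.
Qed.

Lemma separable_fieldTrace_neq0 :
  separable 1%VS {:L} -> ~ (forall x : L, fieldTrace x = 0).
Proof.
move=> sepL trL0; set z := separable_generator 1%AS (fullv : {subfield L}).
have Lz : (fullv : {vspace L}) = <<1; z>>%VS.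
  exact: (@eq_adjoin_separable_generator _ _ (fullv : {subfield L}) 1%AS sepL (subvf _)).
set chi := char_poly (regmx z).
(* All power traces of [regmx z] vanish, so [chi] is inseparable; but it is the
   minimal polynomial of [z]. *)
have chi'_eq0 : chi^`() = 0.
  by rewrite deriv_char_poly mxtrace_adj_char_poly_mx_eq0 // => k; rewrite -regmxX; apply: trL0.
have chi_z : root (map_poly (in_alg L) chi) z.
  by apply/rootP/regmx_inj; rewrite regmx_horner Cayley_Hamilton_coef linear0.
have minPoly_z : minPoly 1 z = map_poly (in_alg L) chi.
  apply/eqP; rewrite -eqp_monic ?monic_minPoly ?map_monic ?char_poly_monic //.
  rewrite -dvdp_size_eqp ?minPoly_dvdp //; last by apply/polyOver1P; exists chi.
  rewrite size_minPoly size_map_poly size_char_poly.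
  by rewrite adjoin_degreeE -Lz dimv1 divn1.
have := separable_generatorP (fullv : {subfield L}) 1%AS.
by rewrite -/z separable_nz_der minPoly_z deriv_map chi'_eq0 map_poly0 eqxx.
Qed.

Lemma fieldTrace_form_eq0 (d : L) : separable 1%VS {:L} ->
  (forall y, fieldTrace (d * y) = 0) -> d = 0.
Proof.
move=> sepL trd0; apply/eqP/contraT => d_neq0; exfalso.
by apply: separable_fieldTrace_neq0 => // y; rewrite -[y](mulVKf d_neq0) trd0.
Qed.

Definition trace_form (w : L) : 'Hom(L, K^o) :=
  (linfun (@fieldTrace K L : L -> K^o) \o amulr w)%VF.

Lemma trace_formE (w x : L) : trace_form w x = fieldTrace (w * x).
Proof. by rewrite comp_lfunE !lfunE /= mulrC. Qed.

Lemma trace_form_is_linear : linear trace_form.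
Proof. by move=> a v w; rewrite /trace_form linearP comp_lfunDr comp_lfunZr. Qed.
HB.instance Definition _ := GRing.isSemilinear.Build K L _ _ trace_form
  (GRing.semilinear_linear trace_form_is_linear).

Lemma trace_form_surj : separable 1%VS {:L} ->
  forall f : 'Hom(L, K^o), exists w, forall x, f x = fieldTrace (w * x).
Proof.
move=> sepL f; pose T : 'Hom(L, 'Hom(L, K^o)) := linfun trace_form.
have T_inj : lker T == 0%VS.
  apply/lker0P => v w; rewrite !lfunE /= => /lfunP Tvw; apply/eqP; rewrite -subr_eq0.
  apply/eqP/fieldTrace_form_eq0 => // y.
  by rewrite mulrBl fieldTraceB -!trace_formE Tvw subrr.
have T_onto : limg T = fullv.
  apply/eqP; rewrite eqEdim subvf limg_dim_eq ?(eqP T_inj) ?capv0 //.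
  by rewrite !dimvf /= /dim /= muln1.
have : f \in limg T by rewrite T_onto memvf.
by case/memv_imgP => w _ ->; exists w => x; rewrite lfunE /= trace_formE.
Qed.

Lemma fieldTrace_frobenius_form_eq0 (p e : nat) (d : L) :
  p \in [pchar K] -> separable 1%VS {:L} ->
  (forall x, fieldTrace (d * x ^+ (p ^ e)) = 0) -> d = 0.
Proof.
move=> pK sepL trd0; apply: fieldTrace_form_eq0 => // y.
have pL : p \in [pchar L] by rewrite (pchar_lalg L).
(* A separable [y] is a [K]-polynomial in [y ^+ (p ^ e)]. *)
have y_adjoin : y \in <<1; y ^+ (p ^ e)>>%VS.
  case: e {trd0} => [|e]; first by rewrite expn0 expr1 memv_adjoin.
  by rewrite -(pcharf_p_separable _ _ _ pL) (separableP sepL) ?memvf.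
rewrite -(Fadjoin_poly_eq y_adjoin) horner_coef mulr_sumr linear_sum big1 // => i _.
have /polyOverP/(_ i)/vlineP[k ->] := Fadjoin_polyOver 1 (y ^+ (p ^ e)) y.
by rewrite mulr_algl -scalerAr linearZ /= -exprM mulnC exprM trd0 scaler0.
Qed.

End FieldTrace.

Lemma is_subring_closed (T : comNzRingType) (A : pred T) :
  is_subring A -> GRing.subring_closed A.
Proof. by case=> A1 AB; split=> // x y xA yA; have [] := AB x y xA yA. Qed.

Section FractionField.
Variables (K : fieldType) (R : pred K).
Hypotheses (subR : is_subring R) (fracR : is_frac_field R).
HB.instance Definition _ := GRing.isSubringClosed.Build K R (is_subring_closed subR).

Lemma common_denominator (s : seq K) :
  exists b, [/\ b \in R, b != 0 & all (fun x => b * x \in R) s].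
Proof.
elim: s => [|x s [b [bR b_neq0 bs]]]; first by exists 1; rewrite rpred1 oner_neq0.
have [a [d [aR dR d_neq0 ->]]] := fracR x.
exists (b * d); rewrite rpredM ?mulf_neq0 //= mulrAC mulrA divfK // rpredM //.
by split=> //; apply/allP => y ys; rewrite mulrAC rpredM // (allP bs y ys).
Qed.

End FractionField.

Section LinearExtension.
Variables (K : fieldType) (L : fieldExtType K) (R : pred K) (S : pred L).
Hypotheses (subR : is_subring R) (subS : is_subring S).
Hypotheses (fracR : is_frac_field R) (fracS : is_frac_field S).
Hypothesis R_sub_S : forall r, r \in R -> r%:A \in S.
HB.instance Definition _ := GRing.isSubringClosed.Build K R (is_subring_closed subR).
HB.instance Definition _ := GRing.isSubringClosed.Build L S (is_subring_closed subS).

Variable g : seq L.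
Hypothesis gS : all (fun s => s \in S) g.
Hypothesis g_spans : forall s, s \in S -> exists c : nat -> K,
  (forall i, c i \in R) /\ s = \sum_(i < size g) (c i)%:A * g`_i.
Local Notation gt := (in_tuple g).

Lemma generator_in_S (i : 'I_(size g)) : gt`_i \in S.
Proof. exact: (allP gS) _ (mem_nth 0 (ltn_ord i)). Qed.

Lemma R_comb_in_S (c : 'I_(size g) -> K) :
  (forall i, c i \in R) -> \sum_i (c i)%:A * gt`_i \in S.
Proof. by move=> cR; apply: rpred_sum => i _; rewrite rpredM ?R_sub_S ?generator_in_S. Qed.

Lemma S_sub_span s : s \in S -> s \in <<gt>>%VS.
Proof.
move=> /g_spans[c [_ ->]]; apply: memv_suml => i _.
by rewrite mulr_algl memvZ // memv_span // mem_nth.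
Qed.

(* The [K]-span of [S] is a finite-dimensional domain, hence a field; it contains
   the fractions of [S], i.e. all of [L]. *)
Lemma span_generators_full : <<gt>>%VS = fullv.
Proof.
have span_mul u v : u \in <<gt>>%VS -> v \in <<gt>>%VS -> u * v \in <<gt>>%VS.
  move=> /coord_span-> /coord_span->; rewrite mulr_suml; apply: memv_suml => i _.
  rewrite -scalerAl mulr_sumr memvZ //; apply: memv_suml => j _.
  by rewrite -scalerAr memvZ // S_sub_span // rpredM ?generator_in_S.
apply/eqP; rewrite eqEsubv subvf; apply/subvP => x _.
have [a [b [aS bS b_neq0 ->]]] := fracS x; rewrite span_mul ?(S_sub_span aS) //.
have b_span_eq : (amulr b @: <<gt>> = <<gt>>)%VS.
  apply/eqP; rewrite eqEdim limg_dim_eq ?(eqP (lker0_amulr _)) ?unitfE ?capv0 //.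
  rewrite leqnn andbT; apply/subvP => _ /memv_imgP[u u_span ->].
  by rewrite lfunE /= span_mul // S_sub_span.
have : 1 \in (amulr b @: <<gt>>)%VS by rewrite b_span_eq S_sub_span ?rpred1.
case/memv_imgP => y y_span; rewrite lfunE /= => yb_eq1.
by rewrite -[b^-1]mul1r yb_eq1 mulfK.
Qed.

Lemma exists_denominator x : exists b, [/\ b \in R, b != 0 & b%:A * x \in S].
Proof.
have [b [bR b_neq0 /allP bc]] :=
  common_denominator subR fracR [seq coord gt i x | i <- enum 'I_(size g)].
exists b; split=> //.
rewrite (coord_span (_ : x \in <<gt>>%VS)) ?span_generators_full ?memvf // mulr_sumr.
rewrite (eq_bigr (fun i => (b * coord gt i x)%:A * gt`_i)) => [|i _]; last first.
  by rewrite !mulr_algl scalerA.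
by apply: R_comb_in_S => i; apply: bc; exact: map_f (mem_enum _ _).
Qed.

Variable psi : L -> K.
Hypothesis psiD : forall s t, s \in S -> t \in S -> psi (s + t) = psi s + psi t.
Hypothesis psiZ : forall r s, r \in R -> s \in S -> psi (r%:A * s) = r * psi s.

Lemma psi0 : psi 0 = 0.
Proof. by apply: (addrI (psi 0)); rewrite -psiD ?rpred0 // !addr0. Qed.

Lemma psi_R_comb (I : Type) (r : seq I) (c : I -> K) (v : I -> L) :
  (forall i, c i \in R) -> (forall i, v i \in S) ->
  psi (\sum_(i <- r) (c i)%:A * v i) = \sum_(i <- r) c i * psi (v i).
Proof.
move=> cR vS; have cvS i : (c i)%:A * v i \in S by rewrite rpredM ?R_sub_S.
elim: r => [|i r IHr]; first by rewrite !big_nil psi0.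
by rewrite !big_cons psiD ?psiZ ?IHr // rpred_sum.
Qed.

Lemma psi_relation (c : 'I_(size g) -> K) :
  \sum_i c i *: gt`_i = 0 -> \sum_i c i * psi gt`_i = 0.
Proof.
move=> rel_c; have [b [bR b_neq0 /allP bc]] :=
  common_denominator subR fracR [seq c i | i <- enum 'I_(size g)].
have bcR i : b * c i \in R by apply: bc; exact: map_f (mem_enum _ _).
apply: (mulfI b_neq0); rewrite mulr0 mulr_sumr.
under eq_bigr => i _ do rewrite mulrA.
rewrite -psi_R_comb //; last exact: generator_in_S.
under eq_bigr => i _ do rewrite mulr_algl -scalerA.
by rewrite -scaler_sumr rel_c scaler0 psi0.
Qed.

Definition psi_ext (x : L) : K^o := \sum_i coord gt i x * psi gt`_i.

Lemma psi_ext_is_linear : linear psi_ext.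
Proof.
move=> a x y; rewrite /psi_ext scaler_sumr -big_split /=; apply: eq_bigr => i _.
by rewrite linearP /= mulrDl -mulrA.
Qed.
HB.instance Definition _ := GRing.isSemilinear.Build K L K^o _ psi_ext
  (GRing.semilinear_linear psi_ext_is_linear).

Lemma psi_extE s : s \in S -> psi_ext s = psi s.
Proof.
move=> sS; have [c [cR def_s]] := g_spans sS.
have: \sum_i (coord gt i s - c i) *: gt`_i = 0.
  under eq_bigr => i _ do rewrite scalerBl -[c i *: _]mulr_algl.
  by rewrite sumrB -def_s -coord_span ?S_sub_span ?subrr.
move/psi_relation; under eq_bigr => i _ do rewrite mulrBl.
rewrite sumrB => /eqP; rewrite subr_eq0 /psi_ext => /eqP ->.
by rewrite [in RHS]def_s psi_R_comb // => i; apply: generator_in_S.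
Qed.

Lemma psi_trace_form : separable 1%VS {:L} ->
  exists w, forall s, s \in S -> psi s = fieldTrace (w * s).
Proof.
move=> sepL; have [w psi_ext_w] := trace_form_surj sepL (linfun psi_ext).
by exists w => s sS; rewrite -psi_extE // -psi_ext_w lfunE.
Qed.

End LinearExtension.

Section PinvLinear.
Variables (F : fieldType) (q : nat) (A : pred F) (f : F -> F).
Hypotheses (subA : is_subring A) (f_lin : is_pinv_linear q A f) (q_gt0 : (0 < q)%N).
HB.instance Definition _ := GRing.isSubringClosed.Build F A (is_subring_closed subA).

Lemma pinv_linear_faithful (c : F) : (exists r, r \in A /\ f r != 0) ->
  c \in A -> (forall r, r \in A -> f (c * r) = 0) -> c = 0.
Proof.
move=> [r [rA fr_neq0]] cA fc0; apply/eqP/contraT => c_neq0; have [_ _ fZ] := f_lin.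
have := fc0 (c ^+ q.-1 * r); rewrite mulrA -exprS prednK // fZ // rpredM ?rpredX //.
by move=> /(_ isT) /eqP; rewrite mulf_eq0 (negPf c_neq0) (negPf fr_neq0).
Qed.

End PinvLinear.

Section FrobeniusCompatibility.
Variables (p e : nat) (K : fieldType) (L : fieldExtType K) (R : pred K) (S : pred L).
Variables (phi : K -> K) (phibar : L -> L) (psi : L -> K).
Hypotheses (pK : p \in [pchar K]) (subR : is_subring R) (subS : is_subring S).
Hypothesis R_sub_S : forall r, r \in R -> r%:A \in S.
Hypotheses (phi_lin : is_pinv_linear (p ^ e) R phi) (phi_neq0 : exists r, r \in R /\ phi r != 0).
Hypothesis phibar_lin : is_pinv_linear (p ^ e) S phibar.
Hypothesis phibar_ext : forall r, r \in R -> phibar r%:A = (phi r)%:A.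
Hypothesis psiR : forall s, s \in S -> psi s \in R.
Hypothesis psiZ : forall r s, r \in R -> s \in S -> psi (r%:A * s) = r * psi s.
Hypothesis psi_phibar : forall s, s \in S -> psi (phibar s) = phi (psi s).
HB.instance Definition _ := GRing.isSubringClosed.Build K R (is_subring_closed subR).
HB.instance Definition _ := GRing.isSubringClosed.Build L S (is_subring_closed subS).
Local Notation q := (p ^ e)%N.

(* For [r] in [R], [phi (r * psi (b ^+ q)) = phi r * psi b = phi (psi b ^+ q * r)],
   and [phi] is faithful. *)
Lemma psi_frobenius b : b \in S -> psi (b ^+ q) = psi b ^+ q.
Proof.
move=> bS; have [phiR phiD phiZ] := phi_lin; have [_ _ phibarZ] := phibar_lin.
have q_gt0 : (0 < q)%N by rewrite expn_gt0 prime_gt0 ?(pcharf_prime pK).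
apply/eqP; rewrite -subr_eq0; apply/eqP.
apply: (pinv_linear_faithful subR phi_lin q_gt0 phi_neq0) => [|r rR].
  by rewrite rpredB ?rpredX ?psiR ?rpredX.
have phiB x y : x \in R -> y \in R -> phi (x - y) = phi x - phi y.
  by move=> xR yR; apply: (addIr (phi y)); rewrite -phiD ?rpredB // !subrK.
have bqS : b ^+ q \in S by rewrite rpredX.
have phi_psi_bq : phi (r * psi (b ^+ q)) = phi r * psi b.
  rewrite -psiZ // -psi_phibar ?rpredM ?R_sub_S // mulrC phibarZ ?R_sub_S //.
  by rewrite phibar_ext // mulrC psiZ ?phiR.
rewrite mulrBl phiB ?rpredM ?rpredX ?psiR // mulrC phi_psi_bq.
by rewrite phiZ ?psiR // mulrC subrr.
Qed.

Lemma trace_form_sub_frobenius_eq0 (w : L) :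
  (forall s, s \in S -> psi s = fieldTrace (w * s)) ->
  forall s, s \in S -> fieldTrace ((w - w ^+ q) * s ^+ q) = 0.
Proof.
move=> psi_w s sS; rewrite mulrBl fieldTraceB -psi_w ?rpredX // psi_frobenius //.
by rewrite psi_w // -fieldTrace_frobenius // exprMn subrr.
Qed.

End FrobeniusCompatibility.

Theorem proposition4p4 (p e : nat) (K : fieldType) (L : fieldExtType K)
  (R : pred K) (S : pred L)
  (phi : K -> K) (phibar : L -> L) (psi : L -> K) :
  p \in [pchar K] ->
  is_subring R -> is_subring S ->
  is_frac_field R -> is_frac_field S ->
  is_normal R -> is_normal S ->
  F_finite p R -> F_finite p S ->
  (forall r, r \in R -> r%:A \in S) ->
  module_finite R S ->
  separable (1%VS : {vspace L}) {:L}%VS ->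
  (* phi ∈ Hom_R(R^{1/p^e}, R), non-zero *)
  is_pinv_linear (p ^ e) R phi ->
  (exists r, r \in R /\ phi r != 0) ->
  (* phibar ∈ Hom_S(S^{1/p^e}, S) extends phi *)
  is_pinv_linear (p ^ e) S phibar ->
  (forall r, r \in R -> phibar (r%:A) = (phi r)%:A) ->
  (* psi ∈ Hom_R(S, R) *)
  (forall s, s \in S -> psi s \in R) ->
  (forall s t, s \in S -> t \in S -> psi (s + t) = psi s + psi t) ->
  (forall r s, r \in R -> s \in S -> psi (r%:A * s) = r * psi s) ->
  (* psi ∘ phibar = phi ∘ psi^{1/p^e} on S^{1/p^e} *)
  (forall s, s \in S -> psi (phibar s) = phi (psi s)) ->
  exists u : L, u ^+ (p ^ e) = u /\
    forall s, s \in S -> psi s = fieldTrace (u * s).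
Proof.
move=> pK subR subS fracR fracS _ _ _ _ R_sub_S [g [gS g_spans]] sepL phi_lin phi_neq0
  phibar_lin phibar_ext psiR psiD psiZ psi_phibar.
have [w psi_w] := psi_trace_form subR subS fracR R_sub_S gS g_spans psiD psiZ sepL.
exists w; split=> //; apply/eqP; rewrite eq_sym -subr_eq0; apply/eqP.
apply: (fieldTrace_frobenius_form_eq0 (e := e) pK sepL) => x.
have [b [_ b_neq0 bxS]] := exists_denominator subR subS fracR fracS R_sub_S gS g_spans x.
have := trace_form_sub_frobenius_eq0 pK subR subS R_sub_S phi_lin phi_neq0 phibar_lin phibar_ext
  psiR psiZ psi_phibar psi_w bxS.
rewrite mulr_algl exprZn -scalerAr fieldTraceZ => /eqP.
by rewrite mulf_eq0 expf_eq0 (negPf b_neq0) andbF => /eqP.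
Qed.
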